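(* Let $\ell$ be a positive integer and let $(T^-,T^+)$ be an ordered pair of rooted plane trees with a total of $\ell-1$ edges. Number the levels of each tree so that its root is at level $1$. Call the non-root vertices at odd levels of $T^-$ and at even levels of $T^+$ ''low'', and the non-root vertices at even levels of $T^-$ and at odd levels of $T^+$ ''high''. Label the low vertices with $1,2,3,\dots$ consecutively, processing levels from the deepest upward and, within a level, from left to right; label the high vertices with $\ell,\ell-1,\ell-2,\dots$ consecutively in the same order (deepest level first, left to right within a level). Let $b\in[\ell]$ be the unique label not used, and label the roots of $T^-$ and $T^+$ by $b^-$ and $b^+$. Define $\mu:[\ell]\to[\ell]$ by $\mu(b)=b$ and, for $i\neq b$, $\mu(i)=$ the label of the parent of the vertex labelled $i$, where a parent labelled $b^\pm$ is read as $b$. Then $\mu$ is a partition (weakly decreasing) and $\mu\in\mathcal{P}^\ell(1)$.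
   Context: $[n]=\{1,\dots,n\}$. A rooted plane tree is a rooted tree in which the children of each vertex are linearly ordered (left to right). $\mathcal{P}^\ell$ denotes the set of partitions $(\mu_1\geq\dots\geq\mu_\ell>0)$ with exactly $\ell$ parts and $\mu_1\leq\ell$, regarded as weakly decreasing maps $[\ell]\to[\ell]$. $\tau_\ell:\mathcal{P}^\ell\to\mathcal{P}^\ell$ is $\tau_\ell(\mu_1,\dots,\mu_\ell)=(\ell+1-\mu_\ell,\dots,\ell+1-\mu_1)$. The sets $\mathcal{P}^\ell(1)\subseteq\mathcal{P}^\ell$ are defined inductively by $\mathcal{P}^1(1)=\{(1)\}$ and, for $\ell\geq2$, $\mathcal{P}^\ell(1)=D_\ell\cup\tau_\ell(D_\ell)$ where $D_\ell=\{\mu\in\mathcal{P}^\ell:(\mu_1,\dots,\mu_{\ell-1})\in\mathcal{P}^{\ell-1}(1)\}$. *)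

From mathcomp Require Import all_boot.
Set Implicit Arguments. Unset Strict Implicit. Unset Printing Implicit Defensive.

Inductive ptree : Type := Node of seq ptree.

Definition leaf : ptree := Node [::].

Fixpoint nverts (t : ptree) : nat :=
  let: Node ts := t in (sumn (map nverts ts)).+1.

Definition nedges (t : ptree) : nat := (nverts t).-1.

(* Vertices are identified by their path from the root (sequence of child
   indices). [level d t] = vertices at depth d (i.e. at level d+1, the root
   being at level 1), listed from left to right. *)
Fixpoint level (d : nat) (t : ptree) : seq (seq nat) :=
  match d, t with
  | 0, _ => [:: [::]]
  | d'.+1, Node ts =>
      flatten [seq map (cons i) (level d' (nth leaf ts i)) | i <- iota 0 (size ts)]
  end.

(* A vertex of the pair (T^-, T^+): false = T^-, true = T^+. *)
Definition vtx := (bool * seq nat)%type.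

Section Labelling.
Variables (l : nat) (Tm Tp : ptree).

(* bound on the depths occurring *)
Definition dbound : nat := nverts Tm + nverts Tp.

Definition depths_down : seq nat := rev (iota 1 dbound).

(* Low vertices: odd levels of T^- (even depth) and even levels of T^+ (odd
   depth); deepest level first, left to right within a level.  (At a given
   level low vertices come from only one of the two trees.) *)
Definition lowv : seq vtx :=
  flatten [seq (if odd d then [seq (true, p) | p <- level d Tp]
                else [seq (false, p) | p <- level d Tm]) | d <- depths_down].

(* High vertices: even levels of T^- (odd depth), odd levels of T^+ (even depth). *)
Definition highv : seq vtx :=
  flatten [seq (if odd d then [seq (false, p) | p <- level d Tm]
                else [seq (true, p) | p <- level d Tp]) | d <- depths_down].

(* the unused label: low labels are 1..#low, high labels are l, l-1, ... *)
Definition blabel : nat := (size lowv).+1.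

(* label of a vertex; the roots b^- and b^+ are read as b *)
Definition label (v : vtx) : nat :=
  if v \in lowv then (index v lowv).+1
  else if v \in highv then l - index v highv
  else blabel.

(* vertex carrying label i (i <> b) *)
Definition vertex_of (i : nat) : vtx :=
  if i <= size lowv then nth (false, [::]) lowv i.-1
  else nth (false, [::]) highv (l - i).

Definition parent (v : vtx) : vtx := (v.1, take (size v.2).-1 v.2).

Definition mu (i : nat) : nat :=
  if i == blabel then blabel else label (parent (vertex_of i)).

Definition mu_seq : seq nat := [seq mu i | i <- iota 1 l].

End Labelling.

(* P^l : partitions with exactly l parts and mu_1 <= l, as weakly decreasing
   sequences of length l with entries in [l]. *)
Definition inP (l : nat) (s : seq nat) : bool :=
  [&& size s == l, sorted geq s & all (fun x => 0 < x <= l) s].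

Definition tau (l : nat) (s : seq nat) : seq nat := rev [seq l.+1 - x | x <- s].

(* P^l(1), defined inductively; D_l = { mu in P^l | (mu_1..mu_{l-1}) in P^{l-1}(1) } *)
Fixpoint Pl1 (l : nat) (s : seq nat) : Prop :=
  match l with
  | 0 => False
  | l'.+1 =>
      if l' == 0 then s = [:: 1]
      else (inP l s /\ Pl1 l' (take l' s))
           \/ (exists nu, (inP l nu /\ Pl1 l' (take l' nu)) /\ s = tau l nu)
  end.

(* Along the labels 1, ..., l the depth of the labelled vertex decreases down to the unused
   label b, which stands for the roots, and then increases again.  The parent of a low vertex
   is high or a root and vice versa, and passing to parents preserves the deepest-first,
   left-to-right order; hence mu is weakly decreasing and sends every label other than its
   fixed point b to a label of strictly smaller depth.  Every such map lies in P^l(1): the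
   deepest label is 1 or l and is the image of no other label, so deleting it (after applying
   tau when it is 1) leaves a map of the same kind on l - 1 labels. *)

From mathcomp Require Import all_boot zify.

Set Implicit Arguments.
Unset Strict Implicit.
Unset Printing Implicit Defensive.

Lemma inP_tau l s : inP l s -> inP l (tau l s).
Proof.
case/and3P => /eqP size_s sorted_s s_range; apply/and3P; split.
- by rewrite size_rev size_map size_s.
- by rewrite rev_sorted sorted_map; apply: sub_sorted sorted_s => x y /=; lia.
- by apply/allP => y; rewrite mem_rev => /mapP [x /(allP s_range) x_range ->]; lia.
Qed.

Lemma inP_tauK l s : inP l s -> tau l (tau l s) = s.
Proof.
case/and3P => _ _ /allP s_range; rewrite /tau map_rev revK -map_comp -[RHS]map_id.
by apply/eq_in_map => x /s_range /=; lia.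
Qed.

Lemma Pl1_inP l s : Pl1 l s -> inP l s.
Proof.
case: l => [|[|l]] //= => [->//|[[]//|[nu [[nu_inP _] ->]]]]; exact: inP_tau.
Qed.

Lemma Pl1_tau l s : Pl1 l s -> Pl1 l (tau l s).
Proof.
case: l => [|[|l]] //= => [->//|[s_D|[nu [nu_D ->]]]]; first by right; exists s.
by left; rewrite inP_tauK; case: nu_D.
Qed.

Lemma take_tau_cons l x s : size s = l -> all (leq 1) s ->
  take l (tau l.+1 (x :: s)) = tau l (map predn s).
Proof.
move=> size_s /allP s_pos; rewrite /tau /= rev_cons -cats1.
rewrite take_size_cat ?size_rev ?size_map // -map_comp; congr rev.
by apply/eq_in_map => y /s_pos /=; lia.
Qed.

Definition depth_lowering (l : nat) (f dep : nat -> nat) : Prop :=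
  [/\ forall i, 0 < i <= l -> 0 < f i <= l,
      forall i j, 0 < i <= j -> j <= l -> f j <= f i,
      forall i j k, 0 < i <= j -> j <= k <= l -> dep j <= maxn (dep i) (dep k)
    & forall i, 0 < i <= l -> f i = i \/ dep (f i) < dep i].

Section DepthLowering.
Variables (l : nat) (f dep : nat -> nat).
Hypothesis f_lowering : depth_lowering l f dep.

Lemma inP_depth_lowering : inP l (map f (iota 1 l)).
Proof.
case: f_lowering => f_range f_anti _ _; apply/and3P; split.
- by rewrite size_map size_iota.
- rewrite sorted_map; apply: sub_in_sorted (allss _) (iota_sorted 1 l).
  by move=> i j; rewrite !mem_iota => i_range j_range ij; apply: f_anti; lia.
- by apply/allP => y /mapP [i]; rewrite mem_iota => i_range ->; apply: f_range; lia.
Qed.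

Lemma depth_lowering_drop_last : 0 < l -> dep 1 <= dep l ->
  depth_lowering l.-1 f dep.
Proof.
case: f_lowering => f_range f_anti dep_valley f_lowers l_pos deep_last.
have deepest j : 0 < j <= l -> dep j <= dep l.
  by move=> j_range; have := dep_valley 1 j l; lia.
split=> [i i_range||i j k *|i i_range]; last by apply: f_lowers; lia.
- have := f_range i; have := f_lowers i; have := deepest i.
  case: (f i =P l) => [->|]; lia.
- by move=> *; apply: f_anti; lia.
- by apply: dep_valley; lia.
Qed.

Lemma depth_lowering_drop_first : 0 < l -> dep l < dep 1 ->
  depth_lowering l.-1 (fun j => (f j.+1).-1) (fun j => dep j.+1).
Proof.
case: f_lowering => f_range f_anti dep_valley f_lowers l_pos deep_first.
have deepest j : 0 < j <= l -> dep j <= dep 1.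
  by move=> j_range; have := dep_valley 1 j l; lia.
split=> [i i_range|i j *|i j k *|i i_range].
- have := f_range i.+1; have := f_lowers i.+1; have := deepest i.+1.
  case: (f i.+1 =P 1) => [->|]; lia.
- by have := f_anti i.+1 j.+1; lia.
- by apply: dep_valley; lia.
- by have := f_lowers i.+1; have := f_range i.+1; case: (f i.+1) => [|x] /=; lia.
Qed.

End DepthLowering.

Theorem Pl1_depth_lowering l f dep : 0 < l -> depth_lowering l f dep ->
  Pl1 l (map f (iota 1 l)).
Proof.
elim: l f dep => [//|l IH] f dep _ f_lowering.
have s_inP := inP_depth_lowering f_lowering.
have [f_range _ _ _] := f_lowering.
case: l IH f_lowering s_inP f_range => [|l] IH f_lowering s_inP f_range.
  by rewrite /=; have := f_range 1 isT; case: (f 1) => [|[|]].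
set s := map f _.
have [deep_last|deep_first] := leqP (dep 1) (dep l.+2).
  left; split=> //; rewrite /s -map_take take_iota (minn_idPl (leqnSn _)).
  exact: IH (depth_lowering_drop_last f_lowering _ deep_last).
right; exists (tau l.+2 s); rewrite inP_tauK //.
split=> //; split; first exact: inP_tau.
have -> : s = f 1 :: map f (map (addn 1) (iota 1 l.+1)) by rewrite -iotaDl.
rewrite take_tau_cons ?size_map ?size_iota //; last first.
  rewrite -map_comp; apply/allP => y /mapP [i]; rewrite mem_iota => i_range ->.
  by have := f_range (1 + i); rewrite /=; lia.
rewrite -!map_comp; apply: Pl1_tau.
exact: IH (depth_lowering_drop_first f_lowering _ deep_first).
Qed.

Lemma sorted_index_lt (T : eqType) (r : rel T) (s : seq T) x y :
  irreflexive r -> transitive r -> sorted r s -> x \in s -> y \in s -> r x y ->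
  index x s < index y s.
Proof.
move=> r_irr r_tr s_sorted xs ys rxy; rewrite ltnNge leq_eqVlt.
apply/negP => /orP [/eqP same_index|lt_index].
  have x_y : x = y by rewrite -(nth_index x xs) -same_index nth_index.
  by move: rxy; rewrite x_y r_irr.
by have := r_tr _ _ _ rxy (sorted_ltn_index r_tr s_sorted y x ys xs lt_index); rewrite r_irr.
Qed.

Fixpoint lexlt (p q : seq nat) : bool :=
  match p, q with
  | x :: p', y :: q' => (x < y) || ((x == y) && lexlt p' q')
  | _, _ => false
  end.

Lemma lexlt_irr : irreflexive lexlt.
Proof. by elim=> //= x p ->; rewrite ltnn eqxx. Qed.

Lemma lexlt_trans : transitive lexlt.
Proof.
move=> q p r; elim: p q r => [|x p IH] [|y q] [|z r] //=.
case/orP => [xy|/andP [/eqP <- pq]]; case/orP => [yz|/andP [/eqP <- qr]].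
- by rewrite (ltn_trans xy yz).
- by rewrite xy.
- by rewrite yz.
- by rewrite eqxx (IH _ _ pq qr) orbT.
Qed.

Lemma lexlt_take n p q : lexlt p q ->
  (take n p == take n q) || lexlt (take n p) (take n q).
Proof.
elim: n p q => [|n IH] [|x p] [|y q] //= /orP [xy|/andP [/eqP <- pq]].
  by rewrite xy orbT.
by rewrite eqseq_cons eqxx ltnn; exact: IH.
Qed.

Lemma size_level d t p : p \in level d t -> size p = d.
Proof.
elim: d t p => [|d IH] [ts] p /=; first by rewrite inE => /eqP ->.
by case/flatten_mapP => i _ /mapP [q /IH q_size ->] /=; rewrite q_size.
Qed.

Lemma level_take d t p : p \in level d.+1 t -> take d p \in level d t.
Proof.
elim: d t p => [|d IH] [ts] p /=; first by rewrite take0 inE.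
case/flatten_mapP => i i_child /mapP [q q_level ->] /=.
by apply/flatten_mapP; exists i => //; apply/map_f/IH.
Qed.

Lemma lexlt_sorted_level d t : sorted lexlt (level d t).
Proof.
elim: d t => [|d IH] [ts] //=; rewrite (sorted_pairwise lexlt_trans).
elim: (size ts) 0 => [|n IHn] m //=; rewrite pairwise_cat IHn andbT pairwise_map.
apply/andP; split.
  apply/allrelP => x y /mapP [p _ ->] /flatten_mapP [j]; rewrite mem_iota => mj.
  by move=> /mapP [q _ ->] /=; rewrite (_ : m < j) //; lia.
rewrite -(sorted_pairwise (leT := relpre (cons m) lexlt)); last first.
  by move=> y x z; exact: lexlt_trans.
by apply: sub_sorted (IH _) => p q /=; rewrite ltnn eqxx.
Qed.

Lemma size_levelS d ts :
  size (level d.+1 (Node ts)) = sumn [seq size (level d c) | c <- ts].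
Proof.
rewrite /= size_flatten /shape -map_comp -{3}(mkseq_nth leaf ts) /mkseq -map_comp.
by congr sumn; apply: eq_map => i /=; rewrite size_map.
Qed.

Lemma sum_size_level N t : nverts t <= N ->
  \sum_(d < N) size (level d t) = nverts t.
Proof.
elim: N t => [|N IH] [ts] //= t_small.
rewrite big_ord_recl /= add1n; congr S.
under eq_bigr => i _ do rewrite size_levelS sumnE big_map.
rewrite exchange_big /= sumnE big_map.
elim: ts t_small => [|c ts IHts] /= t_small; rewrite ?big_nil ?big_cons //.
by rewrite IHts ?IH //; lia.
Qed.

Lemma nedges_sum_level N t : nverts t <= N.+1 ->
  nedges t = \sum_(d <- iota 1 N) size (level d t).
Proof.
move=> t_small; apply/esym; rewrite /nedges -(sum_size_level t_small) big_ord_recl.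
rewrite -(big_mkord xpredT (fun i => size (level i.+1 t))).
rewrite -{1}(subn0 N) -subSS -/(index_iota 1 N.+1) big_add1.
by case: t t_small.
Qed.

(* Vertices of equal depth in different trees are left incomparable: at each depth the low
   (resp. high) vertices all lie in a single tree. *)
Definition before (u v : vtx) : bool :=
  (size v.2 < size u.2) || [&& size u.2 == size v.2, u.1 == v.1 & lexlt u.2 v.2].

Lemma before_irr : irreflexive before.
Proof. by move=> [c p]; rewrite /before ltnn lexlt_irr !andbF. Qed.

Lemma before_trans : transitive before.
Proof.
move=> [c2 q] [c1 p] [c3 r]; rewrite /before /=.
case/orP => [pq|/and3P [/eqP pq /eqP <- lt_pq]];
  case/orP => [qr|/and3P [/eqP qr /eqP <- lt_qr]].
- by rewrite (ltn_trans qr pq).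
- by rewrite -qr pq.
- by rewrite pq qr.
- by rewrite pq qr !eqxx (lexlt_trans lt_pq lt_qr) orbT.
Qed.

Lemma before_size u v : before u v -> size v.2 <= size u.2.
Proof. by case/orP => [/ltnW //|/and3P [/eqP -> _ _]]. Qed.

Lemma size_parent v : size (parent v).2 = (size v.2).-1.
Proof. by rewrite size_takel ?leq_pred. Qed.

Lemma before_parent u v : before u v -> 0 < size v.2 ->
  (parent u == parent v) || before (parent u) (parent v).
Proof.
case: u v => [c p] [c' q]; rewrite /before /parent /= !size_take_min.
case/orP => [qp|/and3P [/eqP pq /eqP <- lt_pq]] q_pos.
  by apply/orP; right; apply/orP; left; lia.
rewrite pq (minn_idPl (leq_pred _)).
by case/orP: (lexlt_take (size q).-1 lt_pq) => [/eqP ->|lt_take]; rewrite !eqxx ?lt_take ?orbT.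
Qed.

Lemma before_sorted_level c d t : sorted before [seq (c, p) | p <- level d t].
Proof.
have level_d : all (fun p => size p == d) (level d t).
  by apply/allP => p /size_level ->.
rewrite sorted_map; apply: sub_in_sorted level_d (lexlt_sorted_level d t).
move=> p q /eqP p_size /eqP q_size lt_pq.
by rewrite /relpre /before /= p_size q_size ltnn !eqxx lt_pq orbT.
Qed.

Lemma before_sorted_flatten (B : nat -> seq vtx) ds : sorted gtn ds ->
  (forall d, all (fun v : vtx => size v.2 == d) (B d)) ->
  (forall d, sorted before (B d)) -> sorted before (flatten (map B ds)).
Proof.
move=> + B_depth B_sorted; rewrite (sorted_pairwise before_trans).
elim: ds => [|d ds IH] //= ds_sorted.
rewrite pairwise_cat -(sorted_pairwise before_trans) B_sorted IH ?andbT; last first.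
  exact: path_sorted ds_sorted.
have ds_lt : all (gtn d) ds.
  move: ds_sorted; rewrite (path_sortedE (leT := gtn)) => [/andP []//|x y z /=]; lia.
apply/allrelP => u v u_d /flatten_mapP [e /(allP ds_lt) /= lt_ed v_e].
move: (allP (B_depth d) u u_d) (allP (B_depth e) v v_e) => /eqP u_size /eqP v_size.
by rewrite /before u_size v_size lt_ed.
Qed.

Section Vertices.
Variables Tm Tp : ptree.

Definition tree (c : bool) : ptree := if c then Tp else Tm.

Definition block (c : bool) (d : nat) : seq vtx := [seq (c, p) | p <- level d (tree c)].

Definition blocks (side : nat -> bool) : seq vtx :=
  flatten [seq block (side d) d | d <- depths_down Tm Tp].

Lemma lowvE : lowv Tm Tp = blocks odd.
Proof. by congr flatten; apply: eq_map => d; case: odd. Qed.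

Lemma highvE : highv Tm Tp = blocks (fun d => ~~ odd d).
Proof. by congr flatten; apply: eq_map => d; case: odd. Qed.

Lemma mem_blocks side v : (v \in blocks side) =
  [&& 0 < size v.2 <= dbound Tm Tp, v.1 == side (size v.2)
    & v.2 \in level (size v.2) (tree v.1)].
Proof.
apply/flatten_mapP/idP => [[d]|/and3P [v_depth /eqP v_side v_level]].
  rewrite mem_rev mem_iota => d_range /mapP [p p_level ->] /=.
  by rewrite (size_level p_level) p_level eqxx andbT; lia.
exists (size v.2); first by rewrite mem_rev mem_iota; lia.
by case: v v_side v_level {v_depth} => c p /= ->; apply: map_f.
Qed.

Lemma before_sorted_blocks side : sorted before (blocks side).
Proof.
apply: before_sorted_flatten => [|d|d]; last exact: before_sorted_level.
  by rewrite rev_sorted; apply: iota_ltn_sorted.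
by apply/allP => _ /mapP [p /size_level p_size ->]; rewrite /= p_size.
Qed.

Lemma size_blocks side :
  size (blocks side) = \sum_(d <- depths_down Tm Tp) size (level d (tree (side d))).
Proof.
by rewrite size_flatten /shape -map_comp sumnE big_map; apply: eq_bigr => d _; rewrite /= size_map.
Qed.

Lemma size_lowv_highv : size (lowv Tm Tp) + size (highv Tm Tp) = nedges Tm + nedges Tp.
Proof.
rewrite lowvE highvE !size_blocks -big_split /=.
rewrite (eq_bigr (fun d => size (level d Tm) + size (level d Tp))); last first.
  by move=> d _; case: odd; rewrite // addnC.
rewrite big_split /= /depths_down !big_rev -!nedges_sum_level //; rewrite /dbound; lia.
Qed.

Lemma before_sorted_lowv : sorted before (lowv Tm Tp).
Proof. by rewrite lowvE; apply: before_sorted_blocks. Qed.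

Lemma before_sorted_highv : sorted before (highv Tm Tp).
Proof. by rewrite highvE; apply: before_sorted_blocks. Qed.

Lemma blocks_depth side v : v \in blocks side -> 0 < size v.2.
Proof. by rewrite mem_blocks => /and3P [/andP []]. Qed.

Lemma lowv_depth v : v \in lowv Tm Tp -> 0 < size v.2.
Proof. by rewrite lowvE => /blocks_depth. Qed.

Lemma highv_depth v : v \in highv Tm Tp -> 0 < size v.2.
Proof. by rewrite highvE => /blocks_depth. Qed.

Lemma lowv_notin_highv v : v \in lowv Tm Tp -> v \notin highv Tm Tp.
Proof.
by rewrite lowvE highvE !mem_blocks => /and3P [_ /eqP -> _]; case: odd; rewrite /= andbF.
Qed.

Lemma parent_blocks side side' v : (forall d, side' d = side d.+1) ->
  v \in blocks side -> (parent v \in blocks side') || (size (parent v).2 == 0).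
Proof.
move=> side_parent; case: v => c p; rewrite !mem_blocks /parent /= size_take_min.
case/and3P => p_range /eqP -> p_level.
case: (size p) p_range p_level => [|[|d]] // p_range p_level.
rewrite (minn_idPl (leqnSn _)) side_parent eqxx (level_take p_level) andbT; lia.
Qed.

Lemma parent_lowv v : v \in lowv Tm Tp ->
  (parent v \in highv Tm Tp) || (size (parent v).2 == 0).
Proof. by rewrite lowvE highvE; apply: parent_blocks. Qed.

Lemma parent_highv v : v \in highv Tm Tp ->
  (parent v \in lowv Tm Tp) || (size (parent v).2 == 0).
Proof. by rewrite lowvE highvE; apply: parent_blocks => d /=; rewrite negbK. Qed.

End Vertices.

Section Labelling.
Variables (l : nat) (Tm Tp : ptree).
Hypotheses (l_pos : 0 < l) (l_count : size (lowv Tm Tp) + size (highv Tm Tp) = l.-1).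
Local Notation lowv := (lowv Tm Tp).
Local Notation highv := (highv Tm Tp).
Local Notation label := (label l Tm Tp).
Local Notation vertex_of := (vertex_of l Tm Tp).
Local Notation b := (blabel Tm Tp).
Local Notation mu := (mu l Tm Tp).

Lemma blabel_range : 0 < b <= l.
Proof. rewrite /blabel; lia. Qed.

Lemma label_lowv v : v \in lowv -> label v = (index v lowv).+1.
Proof. by rewrite /label => ->. Qed.

Lemma label_highv v : v \in highv -> label v = l - index v highv.
Proof. by move=> v_high; rewrite /label v_high ifN // (contraTN (@lowv_notin_highv _ _ v)). Qed.

Lemma label_root v : size v.2 = 0 -> label v = b.
Proof.
move=> v_root; rewrite /label ifN; last by apply/negP => /lowv_depth; rewrite v_root.
by rewrite ifN //; apply/negP => /highv_depth; rewrite v_root.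
Qed.

Lemma index_lowv v : v \in lowv -> index v lowv < size lowv.
Proof. by rewrite index_mem. Qed.

Lemma index_highv v : v \in highv -> index v highv < size highv.
Proof. by rewrite index_mem. Qed.

Lemma label_lowv_range v : v \in lowv -> 0 < label v < b.
Proof.
by move=> v_low; rewrite label_lowv //; have := index_lowv v_low; rewrite /blabel; lia.
Qed.

Lemma label_highv_range v : v \in highv -> b < label v <= l.
Proof.
by move=> v_high; rewrite label_highv //; have := index_highv v_high; rewrite /blabel; lia.
Qed.

Lemma vertex_of_low i : 0 < i < b -> vertex_of i = nth (false, [::]) lowv i.-1.
Proof. by rewrite /vertex_of /blabel ltnS => /andP [_ ->]. Qed.

Lemma vertex_of_high i : b < i -> vertex_of i = nth (false, [::]) highv (l - i).
Proof. by rewrite /vertex_of /blabel => i_high; rewrite ifN //; lia. Qed.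

Lemma vertex_of_blabel : size (vertex_of b).2 = 0.
Proof.
have highv_end : size highv <= l - b by rewrite /blabel; lia.
by rewrite /vertex_of /blabel ltnn (nth_default _ highv_end).
Qed.

Lemma label_lowvK v : v \in lowv -> vertex_of (label v) = v.
Proof. by move=> v_low; rewrite vertex_of_low ?label_lowv_range // label_lowv // nth_index. Qed.

Lemma label_highvK v : v \in highv -> vertex_of (label v) = v.
Proof.
move=> v_high; have /andP [b_lt _] := label_highv_range v_high.
rewrite vertex_of_high // label_highv // subKn ?nth_index //.
by have := index_highv v_high; lia.
Qed.

Lemma vertex_of_lowv i : 0 < i < b -> vertex_of i \in lowv.
Proof.
move=> i_low; have i_index : i.-1 < size lowv by move: i_low; rewrite /blabel; lia.
by rewrite vertex_of_low // (mem_nth _ i_index).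
Qed.

Lemma vertex_of_highv i : b < i <= l -> vertex_of i \in highv.
Proof.
case/andP=> i_high i_le; have i_index : l - i < size highv by move: i_high; rewrite /blabel; lia.
by rewrite vertex_of_high // (mem_nth _ i_index).
Qed.


Lemma vertex_of_low_before i j : 0 < i -> i < j -> j < b -> before (vertex_of i) (vertex_of j).
Proof.
move=> i_pos ij j_low; have j_index : j.-1 < size lowv by move: j_low; rewrite /blabel; lia.
have i_index : i.-1 < size lowv by lia.
rewrite !vertex_of_low ?i_pos ?j_low ?(ltn_trans ij) //; last by lia.
by apply: (sorted_ltn_nth before_trans _ (before_sorted_lowv _ _)) i_index j_index _; lia.
Qed.

Lemma vertex_of_high_before i j : b < i -> i < j -> j <= l -> before (vertex_of j) (vertex_of i).
Proof.
move=> i_high ij j_le; have i_index : l - i < size highv by move: i_high; rewrite /blabel; lia.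
have j_index : l - j < size highv by lia.
rewrite !vertex_of_high ?(ltn_trans i_high ij) //.
by apply: (sorted_ltn_nth before_trans _ (before_sorted_highv _ _)) j_index i_index _; lia.
Qed.

Lemma label_before_lowv x y :
  (x \in lowv) || (size x.2 == 0) -> (y \in lowv) || (size y.2 == 0) ->
  (x == y) || before x y -> label x <= label y.
Proof.
move=> x_low y_low /orP [/eqP -> //|xy].
case/orP: y_low => [y_low|/eqP/label_root ->]; last first.
  by case/orP: x_low => [/label_lowv_range/andP [_ /ltnW]|/eqP/label_root ->].
have x_low' : x \in lowv.
  case/orP: x_low => // /eqP x_root.
  by have := leq_trans (lowv_depth y_low) (before_size xy); rewrite x_root.
have := sorted_index_lt before_irr before_trans (before_sorted_lowv _ _) x_low' y_low xy.
by rewrite !label_lowv //; lia.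
Qed.

Lemma label_before_highv x y :
  (x \in highv) || (size x.2 == 0) -> (y \in highv) || (size y.2 == 0) ->
  (x == y) || before x y -> label y <= label x.
Proof.
move=> x_high y_high /orP [/eqP -> //|xy].
case/orP: y_high => [y_high|/eqP/label_root ->]; last first.
  by case/orP: x_high => [/label_highv_range/andP [/ltnW]|/eqP/label_root ->].
have x_high' : x \in highv.
  case/orP: x_high => // /eqP x_root.
  by have := leq_trans (highv_depth y_high) (before_size xy); rewrite x_root.
have := sorted_index_lt before_irr before_trans (before_sorted_highv _ _) x_high' y_high xy.
by rewrite !label_highv //; lia.
Qed.

Lemma label_parent_lowv v : v \in lowv -> b <= label (parent v) <= l.
Proof.
move/parent_lowv/orP => [/label_highv_range/andP [/ltnW -> ->] //|/eqP/label_root ->].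
by rewrite leqnn (proj2 (andP blabel_range)).
Qed.

Lemma label_parent_highv v : v \in highv -> 0 < label (parent v) <= b.
Proof.
move/parent_highv/orP => [/label_lowv_range/andP [-> /ltnW ->] //|/eqP/label_root ->].
by rewrite /blabel leqnn.
Qed.

Lemma depth_vertex_of_label v : [|| v \in lowv, v \in highv | size v.2 == 0] ->
  size (vertex_of (label v)).2 = size v.2.
Proof.
case/or3P => [/label_lowvK ->|/label_highvK ->|/eqP v_root] //.
by rewrite label_root // vertex_of_blabel v_root.
Qed.

Lemma mu_blabel : mu b = b.
Proof. by rewrite /mu eqxx. Qed.

Lemma mu_vertex_of i : i != b -> mu i = label (parent (vertex_of i)).
Proof. by rewrite /mu => /negbTE ->. Qed.

Lemma mu_low i : 0 < i < b -> b <= mu i <= l.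
Proof.
move=> i_low; rewrite mu_vertex_of ?(ltn_eqF (proj2 (andP i_low))) //.
exact/label_parent_lowv/vertex_of_lowv.
Qed.

Lemma mu_high i : b < i <= l -> 0 < mu i <= b.
Proof.
move=> i_high; rewrite mu_vertex_of ?(gtn_eqF (proj1 (andP i_high))) //.
exact/label_parent_highv/vertex_of_highv.
Qed.

Lemma mu_range i : 0 < i <= l -> 0 < mu i <= l.
Proof.
move=> i_range; have := blabel_range; have [i_low|i_high|->] := ltngtP i b.
- by have := @mu_low i; lia.
- by have := @mu_high i; lia.
- by rewrite mu_blabel; lia.
Qed.

Lemma mu_antitone i j : 0 < i <= j -> j <= l -> mu j <= mu i.
Proof.
move=> /andP [i_pos]; rewrite leq_eqVlt => /orP [/eqP -> //|ij] j_le.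
have [i_low|i_high|i_b] := ltngtP i b; last first.
- by rewrite i_b mu_blabel; have := @mu_high j; lia.
- have [vi_high vj_high] : vertex_of i \in highv /\ vertex_of j \in highv.
    by split; apply: vertex_of_highv; lia.
  rewrite !mu_vertex_of ?(gtn_eqF i_high) ?(gtn_eqF (ltn_trans i_high ij)) //.
  apply: label_before_lowv (parent_highv vj_high) (parent_highv vi_high) _.
  exact: before_parent (vertex_of_high_before i_high ij j_le) (highv_depth vi_high).
have [j_low|j_high|j_b] := ltngtP j b.
- have [vi_low vj_low] : vertex_of i \in lowv /\ vertex_of j \in lowv.
    by split; apply: vertex_of_lowv; lia.
  rewrite !mu_vertex_of ?ltn_eqF //.
  apply: label_before_highv (parent_lowv vi_low) (parent_lowv vj_low) _.
  exact: before_parent (vertex_of_low_before i_pos ij j_low) (lowv_depth vj_low).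
- by have := @mu_low i; have := @mu_high j; lia.
- by rewrite j_b mu_blabel; have := @mu_low i; lia.
Qed.

Lemma depth_valley i j k : 0 < i <= j -> j <= k <= l ->
  size (vertex_of j).2 <= maxn (size (vertex_of i).2) (size (vertex_of k).2).
Proof.
move=> /andP [i_pos ij] /andP [jk k_le].
have [j_low|j_high|->] := ltngtP j b; last by rewrite vertex_of_blabel.
- apply: leq_trans (leq_maxl _ _); move: ij; rewrite leq_eqVlt => /orP [/eqP -> //|ij].
  exact/before_size/vertex_of_low_before.
- apply: leq_trans (leq_maxr _ _); move: jk; rewrite leq_eqVlt => /orP [/eqP -> //|jk].
  exact/before_size/vertex_of_high_before.
Qed.

Lemma vertex_of_lowv_highv i : 0 < i <= l -> i != b ->
  (vertex_of i \in lowv) || (vertex_of i \in highv).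
Proof.
move=> i_range i_ne_b; have [i_low|i_high|i_b] := ltngtP i b; last by rewrite i_b eqxx in i_ne_b.
- by rewrite vertex_of_lowv //; lia.
- by rewrite vertex_of_highv ?orbT //; lia.
Qed.

Lemma vertex_of_depth i : 0 < i <= l -> i != b -> 0 < size (vertex_of i).2.
Proof.
by move=> i_range /(vertex_of_lowv_highv i_range)/orP [/lowv_depth|/highv_depth].
Qed.

Lemma mu_lowers_depth i : 0 < i <= l ->
  mu i = i \/ size (vertex_of (mu i)).2 < size (vertex_of i).2.
Proof.
move=> i_range; have [->|i_ne_b] := eqVneq i b; first by left; rewrite mu_blabel.
right; rewrite mu_vertex_of // depth_vertex_of_label; last first.
  have := vertex_of_lowv_highv i_range i_ne_b.
  by case/orP => [/parent_lowv|/parent_highv] /orP [] ->; rewrite ?orbT.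
by rewrite size_parent; have := vertex_of_depth i_range i_ne_b; lia.
Qed.

Lemma depth_lowering_mu : depth_lowering l mu (fun i => size (vertex_of i).2).
Proof. split; [exact: mu_range|exact: mu_antitone|exact: depth_valley|exact: mu_lowers_depth]. Qed.

End Labelling.

Theorem lemma4p4 (l : nat) (Tm Tp : ptree) :
  0 < l -> nedges Tm + nedges Tp = l.-1 ->
  sorted geq (mu_seq l Tm Tp) /\ Pl1 l (mu_seq l Tm Tp).
Proof.
move=> l_pos edges; rewrite -size_lowv_highv in edges.
have mu_Pl1 := Pl1_depth_lowering l_pos (depth_lowering_mu l_pos edges).
by split=> //; case/and3P: (Pl1_inP mu_Pl1).
Qed.
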